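(* Let $\tau$ be a Young diagram, $l>0$ an integer, $s\in C_\tau$, and $\mu=\Gamma(\tau,s,l)$. Then $|\mu|-|\tau|>0$ and $s=\frac{f(\mu)-f(\tau)}{|\mu|-|\tau|}$.
   Context: For a Young diagram $\lambda$, $|\lambda|$ is its number of cells, $\lambda'_j$ the length of its $j$-th column ($0$ if there is none), $ct(\lambda)=\sum_{(i,j)\in\lambda}(j-i)$, and $f(\lambda)=\frac{|\lambda|^2-|\lambda|}{2}+ct(\lambda)$. $C_\tau=\{|\tau|-1+j-\tau'_j: j\ge1\}$; for $s\in C_\tau$, $j_s$ is the unique $j\ge1$ with $s=|\tau|-1+j-\tau'_j$. $\mathbf{core}_{(\nu-s)}(\tau)$ is the diagram $\eta$ with $\eta'_j=\tau'_j+1$ for $1\le j<j_s$ and $\eta'_j=\tau'_{j+1}$ for $j\ge j_s$. For a diagram $\eta$ and integer $l\ge0$, $\mathbf{rec}(l,\eta)$ is the diagram $\lambda$ defined by taking $k\ge1$ with $\eta'_{k-1}\ge l+1>\eta'_k$ ($\eta'_0:=\infty$) and setting $\lambda'_j=\eta'_j-1$ for $j<k$, $\lambda'_k=l$, $\lambda'_j=\eta'_{j-1}$ for $j>k$. For $l\ge-\tau'_{j_s}$, $\Gamma(\tau,s,l):=\mathbf{rec}(\tau'_{j_s}+l,\mathbf{core}_{(\nu-s)}(\tau))$. *)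

From mathcomp Require Import all_boot all_order all_algebra.
Set Implicit Arguments. Unset Strict Implicit. Unset Printing Implicit Defensive.
Import Order.TTheory GRing.Theory Num.Theory.

(* A Young diagram is represented by the sequence of its column lengths
   [lambda'_1; lambda'_2; ...] : positive and nonincreasing. *)
Definition is_diagram (c : seq nat) : bool :=
  sorted geq c && all (fun x => 0 < x) c.

(* lambda'_j for j >= 1 (0 if there is no such column). *)
Definition col (c : seq nat) (j : nat) : nat := nth 0 c j.-1.

Definition ncells (c : seq nat) : nat := sumn c.

Definition ct (c : seq nat) : int :=
  (\sum_(j < size c) \sum_(i < nth 0 c j) ((j.+1)%:Z - (i.+1)%:Z))%R.

Definition f (c : seq nat) : rat :=
  ((((ncells c)%:R ^+ 2 - (ncells c)%:R) / 2%:R) + (ct c)%:~R)%R.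

Definition Cval (tau : seq nat) (j : nat) : int :=
  ((ncells tau)%:Z - 1 + j%:Z - (col tau j)%:Z)%R.

Definition inC (tau : seq nat) (s : int) : Prop :=
  exists2 j, (0 < j)%N & s = Cval tau j.

(* core_{(nu - s)}(tau), given j = j_s:
   eta'_j = tau'_j + 1 for 1 <= j < j_s, eta'_j = tau'_{j+1} for j >= j_s. *)
Definition core (tau : seq nat) (js : nat) : seq nat :=
  [seq (col tau j).+1 | j <- iota 1 js.-1] ++ drop js tau.

(* rec(l, eta): k is the first column (1-based) with l+1 > eta'_k,
   i.e. k = k0 + 1 with k0 = find (fun x => x <= l) eta; then
   lambda'_j = eta'_j - 1 (j < k), lambda'_k = l, lambda'_j = eta'_{j-1} (j > k). *)
Definition rec (l : nat) (eta : seq nat) : seq nat :=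
  let k0 := find (fun x => x <= l) eta in
  [seq x.-1 | x <- take k0 eta] ++ l :: drop k0 eta.

(* Gamma(tau, s, l) with j_s given (l >= 0 here, so l >= -tau'_{j_s} holds). *)
Definition Gamma (tau : seq nat) (js : nat) (l : nat) : seq nat :=
  rec (col tau js + l) (core tau js).

From Pilot Require Import Defs.
From mathcomp Require Import all_boot all_order all_algebra.
From mathcomp Require Import ring lra zify.
Import Order.TTheory GRing.Theory Num.Theory.

Set Implicit Arguments.
Unset Strict Implicit.
Unset Printing Implicit Defensive.

(* Write u_i for the i-th column of tau (0-based), a = j_s - 1 and L = u_a + l,
   and let p be the column of mu = Gamma(tau, s, l) of length L. Then mu agrees
   with tau outside the columns p..a, mu_p = L and mu_i = u_(i-1) + 1 for
   p < i <= a. Hence for any columnwise statistic F with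
   F i.+1 x.+1 = F i x + (G i.+1 - G i) the difference F(mu) - F(tau)
   telescopes to F p L - F a u_a + G a - G p. With G i = i this gives
   |mu| - |tau| = l + a - p > 0, with G i = i(i+1)/2 it computes
   ct(mu) - ct(tau), and the claimed quotient becomes a rational identity. *)

Local Open Scope ring_scope.

Definition col_content (j x : nat) : rat := j%:R * x%:R - x%:R * (x%:R + 1) / 2%:R.

Definition triangle (k : nat) : rat := k%:R * (k%:R + 1) / 2%:R.

Lemma col_contentE (j x : nat) :
  ((\sum_(i < x) (j%:Z - i.+1%:Z))%:~R : rat) = col_content j x.
Proof.
elim: x => [|x IH]; first by rewrite big_ord0 /col_content; field.
rewrite big_ord_recr rmorphD /= IH rmorphB /= /col_content -!natz -natr1.
by field.
Qed.

Lemma col_contentSS (j x : nat) : col_content j.+1 x.+1 = col_content j x + j%:R.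
Proof. by rewrite /col_content -!natr1; field. Qed.

Lemma triangleS (k : nat) : triangle k.+1 - triangle k = k.+1%:R.
Proof. by rewrite /triangle -natr1; field. Qed.

Lemma sum_nth_pad (V : zmodType) (F : nat -> nat -> V) (c : seq nat) (N : nat) :
  (forall i, F i 0 = 0) -> (size c <= N)%N ->
  \sum_(0 <= i < size c) F i (nth 0 c i) = \sum_(0 <= i < N) F i (nth 0 c i).
Proof.
move=> F0 le_cN; rewrite (@big_cat_nat _ _ _ (size c) 0 N) //=.
rewrite [X in _ + X]big1_seq ?addr0 //.
by move=> i /andP[_]; rewrite mem_index_iota => /andP[hi _]; rewrite nth_default.
Qed.

Lemma ncells_sum (c : seq nat) (N : nat) : (size c <= N)%N ->
  (ncells c)%:R = \sum_(0 <= i < N) ((nth 0 c i)%:R : rat).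
Proof.
move=> le_cN; rewrite -(@sum_nth_pad _ (fun _ x => (x%:R : rat))) //.
by rewrite /ncells sumnE (big_nth 0) natr_sum.
Qed.

Lemma ct_sum (c : seq nat) (N : nat) : (size c <= N)%N ->
  (ct c)%:~R = \sum_(0 <= i < N) col_content i.+1 (nth 0 c i).
Proof.
move=> le_cN; rewrite -(@sum_nth_pad _ (fun i x => col_content i.+1 x)) //; last first.
  by move=> i; rewrite /col_content; field.
rewrite /ct rmorph_sum big_mkord; apply: eq_bigr => j _.
exact: col_contentE.
Qed.

Lemma sum_nat_supported (V : zmodType) (H : nat -> V) (p a N : nat) :
  (p <= a < N)%N -> (forall i, (i < p)%N || (a < i)%N -> H i = 0) ->
  \sum_(0 <= i < N) H i = H p + \sum_(p.+1 <= i < a.+1) H i.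
Proof.
move=> /andP[le_pa lt_aN] H0.
rewrite (@big_cat_nat _ _ _ p) //=; last by lia.
rewrite big1_seq ?add0r; last first.
  by move=> i; rewrite mem_index_iota => /andP[_ /andP[_ lt_ip]]; rewrite H0 ?lt_ip.
rewrite big_ltn; last by lia.
rewrite (@big_cat_nat _ _ _ a.+1 p.+1 N) //= [X in _ + (_ + X)]big1_seq ?addr0 //.
by move=> i; rewrite mem_index_iota => /andP[_ /andP[lt_ai _]]; rewrite H0 ?lt_ai ?orbT.
Qed.

Lemma sum_shifted_telescope (V : zmodType) (F : nat -> nat -> V) (G : nat -> V)
    (u : nat -> nat) (p q : nat) :
  (p <= q)%N -> (forall i x, F i.+1 x.+1 = F i x + (G i.+1 - G i)) ->
  \sum_(p.+1 <= i < q.+1) (F i (u i.-1).+1 - F i (u i))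
    = F p (u p) - F q (u q) + (G q - G p).
Proof.
move=> le_pq FS; rewrite big_add1 /=.
rewrite (telescope_sumr_eq (fun k => G k - F k (u k))) //; last first.
  by move=> k _; rewrite FS opprB addrAC [RHS]addrC addrACA [RHS]addrACA [- G k + _]addrC.
by rewrite opprB addrACA [RHS]addrACA [G q + _]addrC.
Qed.

Lemma geq_nth_sorted (s : seq nat) (i j : nat) : sorted geq s -> (i <= j)%N ->
  (nth 0 s j <= nth 0 s i)%N.
Proof.
move=> s_sorted le_ij; case: (ltnP j (size s)) => [lt_js|ge_js].
  2: by rewrite nth_default.
apply: (@sorted_leq_nth _ geq) => //; rewrite ?inE; try lia.
- by move=> x y z le_yx le_zy; apply: leq_trans le_zy le_yx.
- exact: leqnn.
Qed.

Lemma size_core (tau : seq nat) (a : nat) :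
  size (core tau a.+1) = (a + (size tau - a.+1))%N.
Proof. by rewrite /core size_cat size_map size_iota size_drop. Qed.

Lemma nth_core (tau : seq nat) (a j : nat) :
  nth 0 (core tau a.+1) j = if (j < a)%N then (nth 0 tau j).+1 else nth 0 tau j.+1.
Proof.
rewrite /core nth_cat size_map size_iota /=; case: ifP => lt_ja.
  by rewrite (nth_map 0) ?size_iota // nth_iota // /Defs.col add1n.
by rewrite nth_drop; congr nth; lia.
Qed.

(* The 0-based index of the column of length tau'_(j_s) + l in Gamma(tau, s, l),
   i.e. k - 1 in the definition of rec. *)
Definition Gamma_pos (tau : seq nat) (js l : nat) : nat :=
  find (fun x => x <= Defs.col tau js + l)%N (core tau js).

Section GammaColumns.

Variables (tau : seq nat) (a l : nat).
Hypothesis tau_sorted : sorted geq tau.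

Local Notation u := (nth 0 tau).
Local Notation mu := (Gamma tau a.+1 l).
Local Notation p := (Gamma_pos tau a.+1 l).

Lemma Gamma_pos_le : (p <= a)%N.
Proof.
rewrite /Gamma_pos /core find_cat size_map size_iota /=.
case: ifP => [has_a|_].
  by apply: ltnW; rewrite has_find size_map size_iota in has_a.
case E: (drop a.+1 tau) => [|x r] /=; first by rewrite addn0.
have -> : x = u a.+1 by rewrite -[a.+1]addn0 -nth_drop E.
have le_u : (u a.+1 <= u a + l)%N.
  exact: leq_trans (geq_nth_sorted tau_sorted (leqnSn a)) (leq_addr _ _).
by rewrite /Defs.col /= le_u addn0.
Qed.

Lemma size_Gamma : (size mu <= size tau + a.+1)%N.
Proof.
have := Gamma_pos_le; rewrite /Gamma /rec -/(Gamma_pos _ _ _) size_cat size_map /=.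
by rewrite size_drop size_take size_core; case: ifP; lia.
Qed.

Lemma nth_Gamma (i : nat) :
  nth 0 mu i = if (i < p)%N then u i else if i == p then (u a + l)%N
               else if (i <= a)%N then (u i.-1).+1 else u i.
Proof.
have le_pa := Gamma_pos_le.
have le_p_core : (p <= size (core tau a.+1))%N by rewrite size_core; lia.
rewrite /Gamma /rec -/(Gamma_pos _ _ _) nth_cat size_map (size_takel le_p_core).
case: ifP => [lt_ip|/negbT].
  rewrite (nth_map 0) ?size_takel // nth_take // nth_core.
  by case: ifP => //; lia.
rewrite -leqNgt => le_pi; case: eqP => [->|ne_ip]; first by rewrite subnn.
have -> : (i - p = (i.-1 - p).+1)%N by lia.
rewrite /= nth_drop nth_core subnKC; last by lia.
case: ifP => [lt_i1a|/negbT ge_i1a]; case: ifP => //; try lia.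
by move=> _; rewrite prednK //; lia.
Qed.

Lemma Gamma_colsum_gap (V : zmodType) (F : nat -> nat -> V) (G : nat -> V) (N : nat) :
  (a < N)%N -> (forall i x, F i.+1 x.+1 = F i x + (G i.+1 - G i)) ->
  \sum_(0 <= i < N) (F i (nth 0 mu i) - F i (u i))
    = F p (u a + l)%N - F a (u a) + (G a - G p).
Proof.
move=> lt_aN FS; have le_pa := Gamma_pos_le.
rewrite (@sum_nat_supported _ _ p a) ?le_pa //; last first.
  move=> i out; rewrite nth_Gamma; case: ifP => [_|/negbT ge_ip]; first exact: subrr.
  have [ne_ip le_ia] : i != p /\ (i <= a)%N = false by split; [apply/eqP|]; lia.
  by rewrite (negbTE ne_ip) le_ia subrr.
rewrite nth_Gamma ltnn eqxx.
rewrite (eq_big_nat _ _ (F2 := fun i => F i (u i.-1).+1 - F i (u i))); last first.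
  move=> i /andP[lt_pi le_ia]; rewrite nth_Gamma ltnNge ltnW //= ifN.
    by rewrite -ltnS le_ia.
  by apply/eqP; lia.
by rewrite (sum_shifted_telescope _ le_pa FS) !addrA subrK.
Qed.

Lemma ncells_Gamma : (ncells mu + p = ncells tau + l + a)%N.
Proof.
have lt_aN : (a < size tau + a.+1)%N by lia.
have FS i x : (x.+1%:R : rat) = x%:R + (i.+1%:R - i%:R) by rewrite -!natr1; lra.
have := Gamma_colsum_gap (F := fun _ x => x%:R) (G := fun i => i%:R) lt_aN FS.
rewrite sumrB -!ncells_sum ?size_Gamma ?leq_addr // => gap.
by apply/eqP; rewrite -(eqr_nat rat) !natrD; apply/eqP; rewrite natrD in gap; lra.
Qed.

Lemma ct_Gamma : (ct mu)%:~R = (ct tau)%:~R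
  + (col_content p.+1 (u a + l) - col_content a.+1 (u a) + (triangle a - triangle p)).
Proof.
have lt_aN : (a < size tau + a.+1)%N by lia.
have FS i x : col_content i.+2 x.+1 = col_content i.+1 x + (triangle i.+1 - triangle i).
  by rewrite col_contentSS triangleS.
have := Gamma_colsum_gap (F := fun i x => col_content i.+1 x) (G := triangle) lt_aN FS.
by rewrite sumrB -!ct_sum ?size_Gamma ?leq_addr // => <-; rewrite addrC subrK.
Qed.

End GammaColumns.

Theorem mainTheorem10 (tau : seq nat) (l : nat) (s : int) (js : nat) :
  is_diagram tau -> (0 < l)%N ->
  (0 < js)%N -> s = Cval tau js ->
  let mu := Gamma tau js l in
  (0 < (ncells mu)%:Z - (ncells tau)%:Z)%R /\
  (s%:~R : rat) = ((f mu - f tau) / ((ncells mu)%:R - (ncells tau)%:R))%R.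
Proof.
move=> /andP[tau_sorted _] l_gt0 + ->; case: js => // a _ /=.
have ncells_mu := ncells_Gamma a l tau_sorted.
have ct_mu := ct_Gamma a l tau_sorted.
have le_pa := Gamma_pos_le a l tau_sorted.
set mu := Gamma tau a.+1 l in ncells_mu ct_mu *.
set p := Gamma_pos tau a.+1 l in ncells_mu ct_mu le_pa *.
split; first lia.
have gap : (ncells mu)%:R - (ncells tau)%:R = l%:R + a%:R - p%:R :> rat.
  by move/eqP: ncells_mu; rewrite -(eqr_nat rat) !natrD => /eqP; lra.
have gap_neq0 : l%:R + a%:R - p%:R != 0 :> rat.
  by rewrite -natrD -natrB ?pnatr_eq0; lia.
rewrite gap /f.
have -> : (ncells mu)%:R = (ncells tau)%:R + (l%:R + a%:R - p%:R) :> rat.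
  by rewrite -gap addrC subrK.
rewrite ct_mu /Cval /Defs.col /col_content /triangle.
rewrite !rmorphB !rmorphD /= -!pmulrn rmorphN1 -!natr1.
by field.
Qed.
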